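(* Let $\lambda>0$ and $P(A)=\sum_{1\le i<j\le3}\lambda_i(A)\lambda_j(A)-\lambda\sum_{i=1}^3\lambda_i(A)$ for $A\in\mathbb{R}^{3\times3}$. Then (a) $\lambda\mathbf{1}$ is a point of rank-one convexity of $P$, i.e. for all $a,n\in\mathbb{R}^3$ the function $t\mapsto P(\lambda\mathbf{1}+t\,a\otimes n)$ is convex on $\mathbb{R}$; but (b) $P$ is not polyconvex at $\lambda\mathbf{1}$, i.e. there is no $(C_1,C_2,C_3)\in\mathbb{R}^{3\times3}\times\mathbb{R}^{3\times3}\times\mathbb{R}$ such that $P(A)\ge P(\lambda\mathbf{1})+C_1\cdot(A-\lambda\mathbf{1})+C_2\cdot(\operatorname{cof}A-\lambda^2\mathbf{1})+C_3(\det A-\lambda^3)$ for all $A\in\mathbb{R}^{3\times3}$.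
   Context: $\lambda_1(A),\lambda_2(A),\lambda_3(A)$ denote the singular values of $A$ (square roots of the eigenvalues of $A^TA$); $\mathbf{1}$ is the $3\times3$ identity; $A\cdot B=\operatorname{tr}(A^TB)$; $\operatorname{cof}A$ is the cofactor matrix; $a\otimes n$ is the matrix with entries $a_in_j$. *)

From HB Require Import structures.
From mathcomp Require Import all_boot all_order all_algebra.
From mathcomp Require Import boolp classical_sets reals.
Set Implicit Arguments. Unset Strict Implicit. Unset Printing Implicit Defensive.
Import Order.TTheory GRing.Theory Num.Theory.
Local Open Scope ring_scope.

Section Defs.
Variable R : realType.

(* s = (s1,s2,s3) is a list (with multiplicity) of the singular values of A:
   nonnegative reals whose squares are the eigenvalues of A^T A (counted with
   multiplicity), i.e. the roots of the characteristic polynomial of A^T A. *)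
Definition singular_values_spec (A : 'M[R]_3) (s : R * R * R) : Prop :=
  [/\ 0 <= s.1.1, 0 <= s.1.2, 0 <= s.2 &
      char_poly (A^T *m A) =
        ('X - (s.1.1 ^+ 2)%:P) * ('X - (s.1.2 ^+ 2)%:P) * ('X - (s.2 ^+ 2)%:P)].

Definition singvals (A : 'M[R]_3) : R * R * R :=
  xget (0, 0, 0) (singular_values_spec A).

Definition sv1 (A : 'M[R]_3) : R := (singvals A).1.1.
Definition sv2 (A : 'M[R]_3) : R := (singvals A).1.2.
Definition sv3 (A : 'M[R]_3) : R := (singvals A).2.

Definition Pfun (lam : R) (A : 'M[R]_3) : R :=
  sv1 A * sv2 A + sv1 A * sv3 A + sv2 A * sv3 A
  - lam * (sv1 A + sv2 A + sv3 A).

Definition frob (A B : 'M[R]_3) : R := \tr (A^T *m B).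

Definition cofmx (A : 'M[R]_3) : 'M[R]_3 := \matrix_(i, j) cofactor A i j.

Definition tensor (a n : 'cV[R]_3) : 'M[R]_3 := \matrix_(i, j) (a i 0 * n j 0).

Definition convex_on_R (f : R -> R) : Prop :=
  forall (x y t : R), 0 <= t -> t <= 1 ->
    f (t * x + (1 - t) * y) <= t * f x + (1 - t) * f y.

End Defs.

From HB Require Import structures.
From mathcomp Require Import all_boot all_order all_algebra.
From mathcomp Require Import boolp classical_sets reals.
From mathcomp Require Import ring lra.
Import Order.TTheory GRing.Theory Num.Theory.
Set Implicit Arguments. Unset Strict Implicit. Unset Printing Implicit Defensive.
Local Open Scope ring_scope.

(* Along the rank-one line [lam%:M + t *: a (x) n], the matrix A^T A has the
   eigenvalue lam^2 and two further eigenvalues with product D^2, where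
   D = lam^2 + lam t (a . n).  So the singular values are lam, u, v with
   u v = |D|, and P = u v - lam^2 = |D| - lam^2 is the modulus of an affine
   function of t, hence convex.
   On a diagonal matrix diag(x, y, z) a polyconvex supporting function at
   lam 1 is affine in each of x, y, z separately, whereas P depends only on
   |x|, |y|, |z|; four diagonal test matrices give inequalities whose positive
   combination eliminates C1, C2, C3 and leaves 0 <= -48 lam^2. *)

Definition o0 : 'I_3 := @Ordinal 3 0 isT.
Definition o1 : 'I_3 := @Ordinal 3 1 isT.
Definition o2 : 'I_3 := @Ordinal 3 2 isT.

Lemma big_ord3 (V : nmodType) (F : 'I_3 -> V) : \sum_i F i = F o0 + F o1 + F o2.
Proof.
rewrite !big_ord_recl big_ord0 addr0 addrA.
by congr (F _ + F _ + F _); apply: val_inj.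
Qed.

(* Ordinals computed by [lift] differ from [o0], [o1], [o2] only in their proof
   components; reading entries through [nat] indices lets [ring] identify them. *)
Lemma ord_fun_nat n (T : Type) (F : 'I_n.+1 -> T) :
  exists f : nat -> T, forall i, F i = f i.
Proof. by exists (fun i => F (inord i)) => i; rewrite inord_val. Qed.

Lemma ord_fun2_nat n (T : Type) (F : 'I_n.+1 -> 'I_n.+1 -> T) :
  exists f : nat -> nat -> T, forall i j, F i j = f i j.
Proof. by exists (fun i j => F (inord i) (inord j)) => i j; rewrite !inord_val. Qed.

Lemma det_mx22 (T : comNzRingType) (A : 'M[T]_2) :
  \det A = A ord0 ord0 * A ord_max ord_max - A ord0 ord_max * A ord_max ord0.
Proof.
rewrite (expand_det_row _ ord0) !big_ord_recl big_ord0 /cofactor !det_mx11 !mxE /=.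
have [f eqf] := ord_fun2_nat A.
rewrite !eqf /bump /=; ring.
Qed.

Lemma det_mx33 (T : comNzRingType) (A : 'M[T]_3) : \det A =
  A o0 o0 * (A o1 o1 * A o2 o2 - A o1 o2 * A o2 o1)
  - A o0 o1 * (A o1 o0 * A o2 o2 - A o1 o2 * A o2 o0)
  + A o0 o2 * (A o1 o0 * A o2 o1 - A o1 o1 * A o2 o0).
Proof.
rewrite (expand_det_row _ o0) big_ord3 /cofactor !det_mx22 !mxE /=.
have [f eqf] := ord_fun2_nat A.
rewrite !eqf /bump /=; ring.
Qed.

Definition principal_minors2 (T : comNzRingType) (M : 'M[T]_3) : T :=
  M o0 o0 * M o1 o1 - M o0 o1 * M o1 o0 + M o0 o0 * M o2 o2 - M o0 o2 * M o2 o0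
  + M o1 o1 * M o2 o2 - M o1 o2 * M o2 o1.

Lemma char_poly_mx33 (T : comNzRingType) (M : 'M[T]_3) : char_poly M =
  'X^3 - (\tr M)%:P * 'X^2 + (principal_minors2 M)%:P * 'X - (\det M)%:P.
Proof.
rewrite /char_poly !det_mx33 /char_poly_mx /principal_minors2 /mxtrace big_ord3 !mxE /=.
have [f eqf] := ord_fun2_nat M.
rewrite !eqf !mulr1n !mulr0n; ring.
Qed.

Section SingularValues.
Variable R : realType.
Implicit Types (A : 'M[R]_3) (s : R * R * R) (lam : R).

Definition triple_seq s : seq R := [:: s.1.1; s.1.2; s.2].

Definition Ptriple lam s : R :=
  s.1.1 * s.1.2 + s.1.1 * s.2 + s.1.2 * s.2 - lam * (s.1.1 + s.1.2 + s.2).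

Lemma singular_values_specI A s :
  0 <= s.1.1 -> 0 <= s.1.2 -> 0 <= s.2 ->
  \tr (A^T *m A) = s.1.1 ^+ 2 + s.1.2 ^+ 2 + s.2 ^+ 2 ->
  principal_minors2 (A^T *m A) =
    s.1.1 ^+ 2 * s.1.2 ^+ 2 + s.1.1 ^+ 2 * s.2 ^+ 2 + s.1.2 ^+ 2 * s.2 ^+ 2 ->
  \det (A^T *m A) = s.1.1 ^+ 2 * s.1.2 ^+ 2 * s.2 ^+ 2 ->
  singular_values_spec A s.
Proof.
move=> s1_ge0 s2_ge0 s3_ge0 tr_eq minors_eq det_eq; split=> //.
by rewrite char_poly_mx33 tr_eq minors_eq det_eq; ring.
Qed.

(* The characteristic polynomial of [A^T A] determines the squares of the
   singular values with multiplicity, and squaring is injective on [0, +oo). *)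
Lemma singular_values_spec_perm A s s' :
  singular_values_spec A s -> singular_values_spec A s' ->
  perm_eq (triple_seq s) (triple_seq s').
Proof.
have char_prod t : singular_values_spec A t ->
    char_poly (A^T *m A) =
    \prod_(x <- [seq y ^+ 2 | y <- triple_seq t]) ('X - x%:P).
  by case=> _ _ _ ->; rewrite !big_cons big_nil mulr1 !mulrA.
move=> spec_s spec_s'.
have := perm_map Num.sqrt
  (prod_XsubC_eq (etrans (esym (char_prod _ spec_s)) (char_prod _ spec_s'))).
case: spec_s spec_s' => [? ? ? _] [? ? ? _].
by rewrite /= !sqrtr_sqr !ger0_norm.
Qed.

Lemma Ptriple_perm lam s s' :
  perm_eq (triple_seq s) (triple_seq s') -> Ptriple lam s = Ptriple lam s'.
Proof.
move=> perm_ss'.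
have sum_eq (F : R -> R) : F s.1.1 + F s.1.2 + F s.2 = F s'.1.1 + F s'.1.2 + F s'.2.
  have : \sum_(x <- triple_seq s) F x = \sum_(x <- triple_seq s') F x.
    exact: perm_big.
  by rewrite !big_cons !big_nil !addr0 !addrA.
have twice_P t : 2 * Ptriple lam t =
    (t.1.1 + t.1.2 + t.2) ^+ 2 - (t.1.1 ^+ 2 + t.1.2 ^+ 2 + t.2 ^+ 2)
    - 2 * lam * (t.1.1 + t.1.2 + t.2).
  by rewrite /Ptriple; ring.
apply: (@mulfI _ 2); first by rewrite pnatr_eq0.
by rewrite !twice_P (sum_eq id) (sum_eq (fun x => x ^+ 2)).
Qed.

Lemma Pfun_spec lam A s : singular_values_spec A s -> Pfun lam A = Ptriple lam s.
Proof.
move=> spec_s.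
have spec_sv : singular_values_spec A (singvals A) by apply: xgetPex; exists s.
exact/Ptriple_perm/(singular_values_spec_perm spec_sv spec_s).
Qed.

End SingularValues.

Definition dotv (T : nzRingType) n (a b : 'cV[T]_n) : T := \sum_i a i 0 * b i 0.

Lemma dotv_sqr_le (T : realDomainType) (a b : 'cV[T]_3) :
  dotv a b ^+ 2 <= dotv a a * dotv b b.
Proof.
rewrite /dotv !big_ord3 -subr_ge0.
set a0 := a o0 0; set a1 := a o1 0; set a2 := a o2 0.
set b0 := b o0 0; set b1 := b o1 0; set b2 := b o2 0.
have -> : (a0 * a0 + a1 * a1 + a2 * a2) * (b0 * b0 + b1 * b1 + b2 * b2)
    - (a0 * b0 + a1 * b1 + a2 * b2) ^+ 2 =
  (a0 * b1 - a1 * b0) ^+ 2 + (a0 * b2 - a2 * b0) ^+ 2 + (a1 * b2 - a2 * b1) ^+ 2.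
  by ring.
by rewrite !addr_ge0 ?sqr_ge0.
Qed.

Lemma sqr_sum_prod_exists (T : rcfType) (S p : T) : 0 <= p -> 2 * p <= S ->
  exists u v : T, [/\ 0 <= v, v <= u, u ^+ 2 + v ^+ 2 = S & u * v = p].
Proof.
move=> p_ge0 le_2p_S.
have plus_ge0 : 0 <= S + 2 * p by lra.
have minus_ge0 : 0 <= S - 2 * p by lra.
set x := Num.sqrt (S + 2 * p); set y := Num.sqrt (S - 2 * p).
have x2 : x ^+ 2 = S + 2 * p by rewrite sqr_sqrtr.
have y2 : y ^+ 2 = S - 2 * p by rewrite sqr_sqrtr.
have y_ge0 : 0 <= y by apply: sqrtr_ge0.
have y_le_x : y <= x by apply: ler_wsqrtr; lra.
exists ((x + y) / 2), ((x - y) / 2); split.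
- by rewrite divr_ge0 // subr_ge0.
- lra.
- have -> : ((x + y) / 2) ^+ 2 + ((x - y) / 2) ^+ 2 = (x ^+ 2 + y ^+ 2) / 2 by field.
  by rewrite x2 y2; field.
- have -> : (x + y) / 2 * ((x - y) / 2) = (x ^+ 2 - y ^+ 2) / 4 by field.
  by rewrite x2 y2; field.
Qed.

Section RankOneLine.
Variable R : realType.
Variables (lam : R) (a n : 'cV[R]_3).

Lemma rank_one_line_invariants t :
  let A := lam%:M + t *: tensor a n in
  let D := lam ^+ 2 + lam * dotv a n * t in
  let S := 2 * D + t ^+ 2 * (dotv a a * dotv n n) in
  [/\ \tr (A^T *m A) = lam ^+ 2 + S,
      principal_minors2 (A^T *m A) = lam ^+ 2 * S + D ^+ 2 &
      \det (A^T *m A) = lam ^+ 2 * D ^+ 2].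
Proof.
rewrite /= det_mulmx det_tr det_mx33 /principal_minors2 /mxtrace /dotv /tensor.
rewrite !big_ord3 !mxE !big_ord3 !mxE /=.
have [fa eqa] := ord_fun_nat (fun i => a i 0).
have [fn eqn] := ord_fun_nat (fun i => n i 0).
rewrite !eqa !eqn; split; ring.
Qed.

(* One singular value stays [lam]; the other two have product [|D|]. *)
Lemma Pfun_rank_one_line t : 0 <= lam ->
  Pfun lam (lam%:M + t *: tensor a n) = `|lam ^+ 2 + lam * dotv a n * t| - lam ^+ 2.
Proof.
move=> lam_ge0; have [tr_eq minors_eq det_eq] := rank_one_line_invariants t.
set D := lam ^+ 2 + lam * dotv a n * t in tr_eq minors_eq det_eq *.
set S := 2 * D + t ^+ 2 * (dotv a a * dotv n n) in tr_eq minors_eq det_eq.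
have cauchy_schwarz := dotv_sqr_le a n.
have S_ge : 2 * `|D| <= S.
  have S_ge_2D : 2 * D <= S.
    by rewrite lerDl mulr_ge0 ?sqr_ge0 // (le_trans (sqr_ge0 _) cauchy_schwarz).
  have S_ge_m2D : 0 <= S + 2 * D.
    have -> : S + 2 * D = (2 * lam + t * dotv a n) ^+ 2
        + t ^+ 2 * (dotv a a * dotv n n - dotv a n ^+ 2) by rewrite /S /D; ring.
    by rewrite addr_ge0 ?sqr_ge0 // mulr_ge0 ?sqr_ge0 // subr_ge0.
  by case: (lerP 0 D) => [D_ge0|D_lt0]; [rewrite ger0_norm | rewrite ltr0_norm]; lra.
have [u [v [v_ge0 v_le_u sum_sq prod_uv]]] := sqr_sum_prod_exists (normr_ge0 D) S_ge.
have spec : singular_values_spec (lam%:M + t *: tensor a n) (lam, u, v).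
  apply: singular_values_specI => /=; rewrite ?(le_trans v_ge0 v_le_u) //.
  - by rewrite tr_eq -sum_sq addrA.
  - by rewrite minors_eq -sum_sq -(real_normK (num_real D)) -prod_uv; ring.
  - by rewrite det_eq -(real_normK (num_real D)) -prod_uv; ring.
by rewrite (Pfun_spec _ spec) /Ptriple /= -prod_uv; ring.
Qed.

End RankOneLine.

Lemma convex_on_R_norm_affine (R : realType) (alpha beta gamma : R) :
  convex_on_R (fun t => `|alpha + beta * t| - gamma).
Proof.
move=> x y t t_ge0 t_le1 /=.
have -> : alpha + beta * (t * x + (1 - t) * y) =
  t * (alpha + beta * x) + (1 - t) * (alpha + beta * y) by ring.
have := ler_normD (t * (alpha + beta * x)) ((1 - t) * (alpha + beta * y)).
rewrite !normrM (ger0_norm t_ge0) (ger0_norm (_ : 0 <= 1 - t)); lra.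
Qed.

Lemma rank_one_convex_at_scalar (R : realType) (lam : R) (a n : 'cV[R]_3) :
  0 <= lam -> convex_on_R (fun t => Pfun lam (lam%:M + t *: tensor a n)).
Proof.
move=> lam_ge0 x y t t_ge0 t_le1 /=; rewrite !Pfun_rank_one_line //.
exact: (convex_on_R_norm_affine (lam ^+ 2) (lam * dotv a n) (lam ^+ 2)).
Qed.

Section Diagonal.
Variable R : realType.

Definition diag3 (x y z : R) : 'M[R]_3 := diag_mx (\row_i [:: x; y; z]`_i).

Lemma singular_values_diag3 x y z :
  singular_values_spec (diag3 x y z) (`|x|, `|y|, `|z|).
Proof.
apply: singular_values_specI => //=;
  rewrite ?det_mulmx ?det_tr ?det_mx33 /principal_minors2 /mxtrace;
  rewrite ?big_ord3 !mxE ?big_ord3 ?mxE /= !(real_normK (num_real _)) /=; ring.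
Qed.

Lemma Pfun_diag3 lam x y z :
  Pfun lam (diag3 x y z) = Ptriple lam (`|x|, `|y|, `|z|).
Proof. exact: Pfun_spec (singular_values_diag3 x y z). Qed.

Lemma polyconvex_affine_diag3 (C1 C2 : 'M[R]_3) (C3 lam x y z : R) :
  frob C1 (diag3 x y z - lam%:M) + frob C2 (cofmx (diag3 x y z) - (lam ^+ 2)%:M)
  + C3 * (\det (diag3 x y z) - lam ^+ 3) =
  C1 o0 o0 * (x - lam) + C1 o1 o1 * (y - lam) + C1 o2 o2 * (z - lam)
  + C2 o0 o0 * (y * z - lam ^+ 2) + C2 o1 o1 * (x * z - lam ^+ 2)
  + C2 o2 o2 * (x * y - lam ^+ 2) + C3 * (x * y * z - lam ^+ 3).
Proof.
rewrite det_mx33 /frob /mxtrace /cofmx /cofactor !big_ord3 !mxE !big_ord3 !mxE /=.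
rewrite !det_mx22 !mxE /=; ring.
Qed.

Lemma scalar_mx_diag3 lam : lam%:M = diag3 lam lam lam.
Proof.
rewrite /diag3 -diag_const_mx; congr diag_mx; apply/rowP => i.
by rewrite !mxE; case: i => [[|[|[|?]]] ?].
Qed.

End Diagonal.

Lemma not_polyconvex_at_scalar (R : realType) (lam : R) : 0 < lam ->
  ~ (exists (C1 C2 : 'M[R]_3) (C3 : R),
       forall A : 'M[R]_3,
         Pfun lam (lam%:M : 'M[R]_3) + frob C1 (A - lam%:M)
         + frob C2 (cofmx A - (lam ^+ 2)%:M) + C3 * (\det A - lam ^+ 3)
         <= Pfun lam A).
Proof.
move=> lam_gt0 [C1 [C2 [C3 bound]]].
have lam_ge0 := ltW lam_gt0.
have P0 : Pfun lam lam%:M = 0.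
  by rewrite scalar_mx_diag3 Pfun_diag3 /Ptriple /= ger0_norm //; ring.
have test x y z :
    C1 o0 o0 * (x - lam) + C1 o1 o1 * (y - lam) + C1 o2 o2 * (z - lam)
    + C2 o0 o0 * (y * z - lam ^+ 2) + C2 o1 o1 * (x * z - lam ^+ 2)
    + C2 o2 o2 * (x * y - lam ^+ 2) + C3 * (x * y * z - lam ^+ 3)
    <= Ptriple lam (`|x|, `|y|, `|z|).
  by have := bound (diag3 x y z); rewrite P0 add0r polyconvex_affine_diag3 -Pfun_diag3.
(* 8 * (lam, lam, 4 lam) + 9 * (4 lam, 0, 0) + 9 * (0, 4 lam, 0) + 6 * (-2 lam, -2 lam, 0)
   cancels every entry of C1, C2 and C3 and leaves 0 <= -48 lam^2. *)
have := test lam lam (4 * lam); have := test (4 * lam) 0 0.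
have := test 0 (4 * lam) 0; have := test (- (2 * lam)) (- (2 * lam)) 0.
rewrite /Ptriple /= normrN normr0 !ger0_norm ?mulr_ge0 //.
have lam2_gt0 : 0 < lam * lam by rewrite mulr_gt0.
lra.
Qed.

Theorem proposition2p3 (R : realType) (lam : R) (hlam : 0 < lam) :
  (forall a n : 'cV[R]_3,
     convex_on_R (fun t : R => Pfun lam (lam%:M + t *: tensor a n)))
  /\
  ~ (exists (C1 C2 : 'M[R]_3) (C3 : R),
       forall A : 'M[R]_3,
         Pfun lam (lam%:M : 'M[R]_3) + frob C1 (A - lam%:M)
         + frob C2 (cofmx A - (lam ^+ 2)%:M) + C3 * (\det A - lam ^+ 3)
         <= Pfun lam A).
Proof.
split; last exact: not_polyconvex_at_scalar.
by move=> a n; exact: rank_one_convex_at_scalar (ltW hlam).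
Qed.
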